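(* Let $\Phi=\varphi\land\bigwedge RE\land\bigwedge DI$ be an $\mathcal{ALCQIO}_{b,Re}$-formula over $\tau$ with $RE=\{\mathit{Reach}(B_1,S_1,A_1),\dots,\mathit{Reach}(B_h,S_h,A_h)\}$, let $\mathcal{M}$ be a $\Phi$-semi-connected $\tau$-structure, let $1\le h'\le h$, let $f$ be an $h'$-useful labeling for $\mathcal{M}$, and let $X$ be a base for $D^{\mathcal{M}}_{h'}$ with $\mathit{val}_f(X)=\mathit{val}_f(D^{\mathcal{M}}_{h'})$. Then every $x\in X$ either belongs to $B_{h'}^{\mathcal{M}}$ or lies on a directed cycle of $D^{\mathcal{M}}_{h'}$.
   Context: Structures are finite; $\tau$ has atomic concepts, atomic roles (a subset $\mathsf{N_F}$ functional, interpreted as partial functions) and nominals. $\mathcal{ALCQIO}_b$ is the description logic with concepts built from atomic concepts and nominals using $\sqcap,\sqcup,\neg,\exists r.C,\exists^{\le n}r.C$ (roles atomic or inverse) and formulae Boolean combinations of inclusions $C\sqsubseteq D$. A reachability assertion $\mathit{Reach}(B,S,A)$ has atomic concepts $A,B$ and $S\subseteq\mathsf{N_F}$; an $\mathcal{ALCQIO}_{b,Re}$-formula is $\Phi=\varphi\land\bigwedge RE\land\bigwedge DI$ with $\varphi\in\mathcal{ALCQIO}_b$, $RE$ a finite set of reachability assertions and $DI$ a finite set of disjointness assertions $A_1\sqcap A_2\equiv\bot$, compatible (whenever two assertions in $RE$ share a role, their $A$-concepts are declared disjoint in $DI$). $\mathit{assoc}(\Phi)=\varphi\land\bigwedge_{\mathit{Reach}(B,S,A)\in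 RE}(B\sqsubseteq A)\land\bigwedge DI$. $D^{\mathcal{M}}_{h'}$ is the directed graph on vertex set $A_{h'}^{\mathcal{M}}$ with edges $\bigcup_{s\in S_{h'}}s^{\mathcal{M}}\cap(A_{h'}^{\mathcal{M}}\times A_{h'}^{\mathcal{M}})$. $\mathcal{M}$ is $\Phi$-semi-connected if $\mathcal{M}\models\mathit{assoc}(\Phi)$ and for every $h'$ and $u\in A_{h'}^{\mathcal{M}}$, $u$ is reachable in $D^{\mathcal{M}}_{h'}$ from $B_{h'}^{\mathcal{M}}$ or from a directed cycle of $D^{\mathcal{M}}_{h'}$. Types: $\mathrm{Con}(\varphi)$ is the set of concepts occurring in $\varphi$ (including subconcepts), $\mathrm{TYPES}_\varphi$ its power set, $\overline{tp}^{\varphi}_{\mathcal{M}}(u)=\{C\in\mathrm{Con}(\varphi)\mid u\in C^{\mathcal{M}}\}$. An $h'$-useful labeling for $\mathcal{M}$ is $f:A_{h'}^{\mathcal{M}}\to[1,|\mathrm{TYPES}_\varphi|]$ such that (1) $f(u)=f(v)$ implies equal types, and (2) for every $u\in A_{h'}^{\mathcal{M}}$, either $u\in B_{h'}^{\mathcal{M}}$ or there are $v,w\in A_{h'}^{\mathcal{M}}$ with $f(u)=f(v)$, $f(w)<f(v)$ and $(w,v)$ an edge of $D^{\mathcal{M}}_{h'}$. A base for $D^{\mathcal{M}}_{h'}$ is a set $X\subseteq A_{h'}^{\mathcal{M}}$ from which all of $A_{h'}^{\mathcal{M}}$ is reachable in $D^{\mathcal{M}}_{h'}$; $\mathit{val}_f(X)=\sum_{x\in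 X\setminus B_{h'}^{\mathcal{M}}}f(x)$ and $\mathit{val}_f(D^{\mathcal{M}}_{h'})$ is the minimum of $\mathit{val}_f(X)$ over all bases $X$. *)

From HB Require Import structures.
From mathcomp Require Import all_boot.
Unset Implicit Arguments. Unset Strict Implicit. Unset Printing Implicit Defensive.

(* Names: atomic concepts, atomic roles and nominals are indexed by nat.
   A role occurrence is (r, inv): inv = true means the inverse role r^-. *)
Definition role := (nat * bool)%type.

Inductive concept : Type :=
  | CAtom of nat
  | CNom of nat
  | CAnd of concept & concept
  | COr of concept & concept
  | CNot of concept
  | CEx of role & concept
  | CAtMost of nat & role & concept.

Definition concept_eq_dec (x y : concept) : {x = y} + {x <> y}.
Proof. repeat decide equality. Defined.
HB.instance Definition _ := comparableMixin concept_eq_dec.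

Inductive formula : Type :=
  | FIncl of concept & concept
  | FAnd of formula & formula
  | FOr of formula & formula
  | FNot of formula.

Record structure := Structure {
  dom : finType;
  cI : nat -> {set dom};
  rI : nat -> rel dom;
  nI : nat -> dom          (* nominals, interpreted as singletons {nI o} *)
}.
Arguments cI : clear implicits.
Arguments rI : clear implicits.
Arguments nI : clear implicits.

Definition tau_structure (NF : pred nat) (M : structure) : Prop :=
  forall r, NF r -> forall u v w : dom M, rI M r u v -> rI M r u w -> v = w.

Definition roleI (M : structure) (r : role) : rel (dom M) :=
  fun u v => if r.2 then rI M r.1 v u else rI M r.1 u v.

Fixpoint sat (M : structure) (u : dom M) (C : concept) {struct C} : bool :=
  match C with
  | CAtom a => u \in cI M a
  | CNom o => u == nI M o
  | CAnd C1 C2 => sat M u C1 && sat M u C2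
  | COr C1 C2 => sat M u C1 || sat M u C2
  | CNot C1 => ~~ sat M u C1
  | CEx r C1 => [exists v, roleI M r u v && sat M v C1]
  | CAtMost n r C1 => #|[set v | roleI M r u v && sat M v C1]| <= n
  end.

Fixpoint models (M : structure) (F : formula) : bool :=
  match F with
  | FIncl C D => [forall u : dom M, sat M u C ==> sat M u D]
  | FAnd F1 F2 => models M F1 && models M F2
  | FOr F1 F2 => models M F1 || models M F2
  | FNot F1 => ~~ models M F1
  end.

Fixpoint subc (C : concept) : seq concept :=
  C :: match C with
       | CAtom _ | CNom _ => [::]
       | CAnd C1 C2 | COr C1 C2 => subc C1 ++ subc C2
       | CNot C1 | CEx _ C1 | CAtMost _ _ C1 => subc C1
       end.

Fixpoint Con (F : formula) : seq concept :=
  match F with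
  | FIncl C D => subc C ++ subc D
  | FAnd F1 F2 | FOr F1 F2 => Con F1 ++ Con F2
  | FNot F1 => Con F1
  end.

(* |TYPES_phi| = |powerset of Con(phi)| *)
Definition nTYPES (F : formula) : nat := 2 ^ size (undup (Con F)).

Definition tp (F : formula) (M : structure) (u : dom M) : pred concept :=
  fun C => (C \in Con F) && sat M u C.

(* Reach(B, S, A) encoded as ((B, S), A) *)
Definition reach := ((nat * seq nat) * nat)%type.
Definition rB (a : reach) : nat := a.1.1.
Definition rS (a : reach) : seq nat := a.1.2.
Definition rA (a : reach) : nat := a.2.

(* Phi = phi /\ /\RE /\ /\DI ; DI: pairs (A1, A2) standing for A1 ⊓ A2 ≡ ⊥ *)
Record formulaRe := FormulaRe {
  phi : formula;
  RE : seq reach;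
  DI : seq (nat * nat)
}.

Definition wf_formulaRe (NF : pred nat) (P : formulaRe) : Prop :=
  (forall a, a \in RE P -> forall s, s \in rS a -> NF s) /\
  (forall a b, a \in RE P -> b \in RE P -> a != b ->
     has (fun s => s \in rS b) (rS a) ->
     ((rA a, rA b) \in DI P) || ((rA b, rA a) \in DI P)).

(* the i-th (1-based) reachability assertion *)
Definition reach_i (P : formulaRe) (i : nat) : reach :=
  nth ((0, [::]), 0) (RE P) i.-1.

Definition models_assoc (M : structure) (P : formulaRe) : Prop :=
  models M (phi P) /\
  (forall a, a \in RE P -> cI M (rB a) \subset cI M (rA a)) /\
  (forall d, d \in DI P -> cI M d.1 :&: cI M d.2 = set0).

Definition Dedge (M : structure) (a : reach) : rel (dom M) :=
  fun u v => [&& u \in cI M (rA a), v \in cI M (rA a) &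
                 has (fun s => rI M s u v) (rS a)].

Definition on_cycle (M : structure) (a : reach) (u : dom M) : bool :=
  [exists v, Dedge M a u v && connect (Dedge M a) v u].

Definition semi_connected (M : structure) (P : formulaRe) : Prop :=
  models_assoc M P /\
  forall i, 1 <= i <= size (RE P) ->
    forall u, u \in cI M (rA (reach_i P i)) ->
      (exists2 b, b \in cI M (rB (reach_i P i)) &
                  connect (Dedge M (reach_i P i)) b u) \/
      (exists2 c, on_cycle M (reach_i P i) c &
                  connect (Dedge M (reach_i P i)) c u).

(* h'-useful labeling (values outside A_{h'} are irrelevant) *)
Definition useful_labeling (P : formulaRe) (M : structure) (i : nat)
    (f : dom M -> nat) : Prop :=
  let a := reach_i P i in
  let A := cI M (rA a) in
  (forall u, u \in A -> 1 <= f u <= nTYPES (phi P)) /\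
  (forall u v, u \in A -> v \in A -> f u = f v ->
     tp (phi P) M u =1 tp (phi P) M v) /\
  (forall u, u \in A ->
     u \in cI M (rB a) \/
     exists v w, [/\ v \in A, w \in A, f u = f v, f w < f v & Dedge M a w v]).

Definition is_base (M : structure) (a : reach) (X : {set dom M}) : bool :=
  (X \subset cI M (rA a)) &&
  [forall u in cI M (rA a), [exists x in X, connect (Dedge M a) x u]].

Definition valf (M : structure) (a : reach) (f : dom M -> nat)
    (X : {set dom M}) : nat :=
  \sum_(x in X :\: cI M (rB a)) f x.

(* val_f(D): minimum over all bases (A itself is a base) *)
Definition valD (M : structure) (a : reach) (f : dom M -> nat) : nat :=
  \big[minn/valf M a f (cI M (rA a))]_(Y : {set dom M} | is_base M a Y) valf M a f Y.

From mathcomp Require Import all_boot order.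

Set Implicit Arguments.
Unset Strict Implicit.

(* If x is in X but neither in B nor on a cycle, semi-connectedness provides
   another vertex y of A reaching x; some z of X reaches y, and z differs from
   x since x is on no cycle.  Hence X minus x is still a base, and its value
   is smaller by f x >= 1, contradicting the minimality of X. *)

Lemma connect_cycle (T : finType) (e : rel T) (x y : T) :
  x != y -> connect e x y -> connect e y x -> [exists v, e x v && connect e v x].
Proof.
move=> nxy /connectP [p pth eyp]; subst y.
case: p pth nxy => [|v p] /=; first by rewrite eqxx.
case/andP=> exv pth _ cyx; apply/existsP; exists v; rewrite exv /=.
by apply: connect_trans cyx; apply/connectP; exists p.
Qed.

Lemma reach_i_in_RE (P : formulaRe) (i : nat) :
  1 <= i <= size (RE P) -> reach_i P i \in RE P.
Proof. by case: i => //= i lt_i; apply: mem_nth. Qed.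

Section Bases.

Variables (M : structure) (a : reach).
Local Notation A := (cI M (rA a)).
Local Notation B := (cI M (rB a)).
Local Notation D := (Dedge M a).

Lemma is_base_reach (X : {set dom M}) (u : dom M) :
  is_base M a X -> u \in A -> exists2 x, x \in X & connect D x u.
Proof.
case/andP=> _ /forallP /(_ u) /implyP reachX /reachX /existsP [x /andP [xX cxu]].
by exists x.
Qed.

Lemma is_base_setD1 (X : {set dom M}) (x z : dom M) :
  is_base M a X -> z \in X -> z != x -> connect D z x -> is_base M a (X :\ x).
Proof.
move=> baseX zX nzx czx; apply/andP; split.
  by apply: subset_trans (subsetDl _ _) _; case/andP: baseX.
apply/forallP => u; apply/implyP => uA.
have [y yX cyu] := is_base_reach baseX uA.
apply/existsP; have [eyx | nyx] := eqVneq y x.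
  by exists z; rewrite !inE nzx zX (connect_trans czx) -?eyx.
by exists y; rewrite !inE nyx yX.
Qed.

Lemma valD_le_valf (f : dom M -> nat) (Y : {set dom M}) :
  is_base M a Y -> valD M a f <= valf M a f Y.
Proof. exact: (@Order.TotalTheory.bigmin_le_cond _ nat). Qed.

Lemma valf_setD1 (f : dom M -> nat) (X : {set dom M}) (x : dom M) :
  x \in X -> x \notin B -> valf M a f X = f x + valf M a f (X :\ x).
Proof.
move=> xX xB; rewrite /valf (bigD1 x) /=; last by rewrite !inE xB xX.
by congr (_ + _); apply: eq_bigl => u; rewrite !inE -andbA (andbC (u \in X)).
Qed.

End Bases.

Lemma semi_connected_pred (P : formulaRe) (M : structure) (i : nat) (x : dom M) :
  let a := reach_i P i in
  semi_connected M P -> 1 <= i <= size (RE P) ->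
  x \in cI M (rA a) -> x \notin cI M (rB a) -> ~~ on_cycle M a x ->
  exists y, [/\ y \in cI M (rA a), y != x & connect (Dedge M a) y x].
Proof.
move=> a [[_ [BsubA _]] reachA] lt_i xA xB ncyc.
have [[b bB cbx] | [c cc ccx]] := reachA i lt_i x xA.
  exists b; split=> //; first exact: subsetP (BsubA _ (reach_i_in_RE lt_i)) _ bB.
  by apply: contraNneq xB => <-.
exists c; split=> //; first by case/existsP: cc => v /andP [/andP []].
by apply: contraNneq ncyc => <-.
Qed.

Theorem lemma6 (NF : pred nat) (P : formulaRe) (M : structure)
  (i : nat) (f : dom M -> nat) (X : {set dom M}) :
  tau_structure NF M ->
  wf_formulaRe NF P ->
  semi_connected M P ->
  1 <= i <= size (RE P) ->
  useful_labeling P M i f ->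
  is_base M (reach_i P i) X ->
  valf M (reach_i P i) f X = valD M (reach_i P i) f ->
  forall x, x \in X ->
    (x \in cI M (rB (reach_i P i))) || on_cycle M (reach_i P i) x.
Proof.
move=> _ _ semi lt_i [f_pos _] baseX minX x xX.
set a := reach_i P i in baseX minX *.
have xA : x \in cI M (rA a) by apply: subsetP xX; case/andP: baseX.
apply/norP => -[xB ncyc].
have [y [yA nyx cyx]] := semi_connected_pred semi lt_i xA xB ncyc.
have [z zX czy] := is_base_reach baseX yA.
have czx := connect_trans czy cyx.
have nzx : z != x.
  apply: contraNneq ncyc => ezx; rewrite eq_sym in nyx.
  by apply: connect_cycle nyx _ cyx; rewrite -ezx.
have := valD_le_valf f (is_base_setD1 baseX zX nzx czx).
rewrite -minX (valf_setD1 _ xX xB) -[X in _ <= X]add0n leq_add2r leqNgt.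
by case/andP: (f_pos x xA) => ->.
Qed.
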